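(* Let $\mathcal{A}$ be a finite set of alternatives, $N\ge2$, $i\in\{1,\dots,N\}$, and $w:\underline{\mathcal{P}}^N\to\underline{\mathcal{P}}$ satisfy Unanimity and IIA. If $w$ has a dictator at $i$ and satisfies Unrestricted Domain, then the self-reference system $(w,\Omega_i)$ with valid elements $\mathcal{P}^N$ is not quasi-Gödelian with respect to $\Upsilon_i=(\mathbf{c},\dots,\mathbf{i},\dots,\mathbf{c})$.
   Context: $\mathcal{P}$: weak orders on $\mathcal{A}$; $\underline{\mathcal{P}}=\mathcal{P}\cup\{\mathbf{c}\}$, $\mathbf{c}$ a new element (contradictory preference cycle). Strictness order: $r\le s$ iff every strict preference of $s$ is one of $r$; $\mathbf{c}$ bottom, $\mathbf{i}$ (total indifference) top; $\wedge,\vee$ meet and join; $\neg\mathbf{c}=\mathbf{i}$, $\neg\mathbf{i}=\mathbf{c}$, otherwise $\neg r$ reverses all strict preferences of $r$. On $\underline{\mathcal{P}}^N$ operations and order are coordinatewise; valid elements are $\mathcal{P}^N$; $p,q$ are inconsistent if $p_j\wedge q_j=\mathbf{c}$ for some $j$. $\Omega_i((p_1,\dots,p_N),r)=(\mathbf{c},\dots,p_i\wedge r,\dots,\mathbf{c})$; $e\ast f:=\Omega_i(e,w(f))$. For $d\in\mathcal{P}^N$: $d$ is a quasi-Gödel sentence w.r.t. $\Upsilon$ if $d\le\neg(\Upsilon\ast d)$; $(\Upsilon,d)$ is quasi-consistent if $d\le\neg(\Upsilon\ast\neg d)$ and quasi-complete if $\neg(\Upsilon\ast d)$, $\neg(\Upsilon\ast\neg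 d)$ are inconsistent. The system is quasi-Gödelian w.r.t. $\Upsilon$ if some $d\in\mathcal{P}^N$ is a quasi-Gödel sentence and $(\Upsilon,d)$ does not satisfy both quasi-consistency and quasi-completeness. Unanimity: if all individuals of $p\in\mathcal{P}^N$ strictly prefer $a$ to $b$, so does $w(p)$. IIA: aggregate comparison of $a,b$ depends only on individuals' comparisons of $a,b$. Dictator at $i$: for all $p\in\mathcal{P}^N$, $w(p)=\mathbf{c}\Rightarrow p_i=\mathbf{i}$ and $p_i\ne\mathbf{i}\Rightarrow w(p)\le p_i$. Unrestricted Domain: $w(\mathcal{P}^N)=\mathcal{P}$. *)

From mathcomp Require Import all_boot.
Set Implicit Arguments. Unset Strict Implicit. Unset Printing Implicit Defensive.

Section Prefs.
Variable A : finType.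

(* A (weak) relation on A, as a boolean matrix: R a b = "a is weakly preferred to b". *)
Definition wrel := {ffun A -> {ffun A -> bool}}.

Definition is_wo (R : wrel) : bool :=
  [forall a, forall b, R a b || R b a] &&
  [forall a, forall b, forall c, R a b ==> R b c ==> R a c].

Definition worder := {R : wrel | is_wo R}.

(* underline P = P ∪ {c}; None is c (the contradictory preference cycle) *)
Definition upref := option worder.
Definition contra : upref := None.

Definition to_up (R : wrel) : upref := insub R.

Definition strict (r : worder) (a b : A) : bool := val r a b && ~~ val r b a.

Definition indiff : upref := to_up [ffun _ => [ffun _ => true]].

Definition ple (r s : upref) : bool :=
  match r, s with
  | None, _ => true
  | Some _, None => false
  | Some r, Some s => [forall a, forall b, strict s a b ==> strict r a b]
  end.

(* meet in the strictness order: the intersection of the two weak relations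
   if it is complete (then it is the glb), and c otherwise *)
Definition pmeet (r s : upref) : upref :=
  match r, s with
  | Some r, Some s => to_up [ffun a => [ffun b => val r a b && val s a b]]
  | _, _ => None
  end.

Definition pneg (r : upref) : upref :=
  match r with
  | None => indiff
  | Some r0 => if r == indiff then None
               else to_up [ffun a => [ffun b => val r0 b a]]
  end.

Definition sprefU (r : upref) (a b : A) : bool :=
  if r is Some r0 then strict r0 a b else true.

Definition cmpU (r : upref) (a b : A) : option (bool * bool) :=
  if r is Some r0 then Some (val r0 a b, val r0 b a) else None.

Variable N : nat.
Definition profile := 'I_N -> upref.

Definition valid (p : profile) : Prop := forall j, p j != None.

Definition prle (p q : profile) : Prop := forall j, ple (p j) (q j).
Definition prneg (p : profile) : profile := fun j => pneg (p j).
Definition inconsistent (p q : profile) : Prop := exists j, pmeet (p j) (q j) = None.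

Variable w : profile -> upref.

Definition Unanimity : Prop :=
  forall p, valid p -> forall a b, (forall j, sprefU (p j) a b) -> sprefU (w p) a b.

Definition IIA : Prop :=
  forall p q, valid p -> valid q -> forall a b,
    (forall j, cmpU (p j) a b = cmpU (q j) a b) -> cmpU (w p) a b = cmpU (w q) a b.

Definition dictator (i : 'I_N) : Prop :=
  forall p, valid p ->
    (w p = None -> p i = indiff) /\ (p i != indiff -> ple (w p) (p i)).

Definition UnrestrictedDomain : Prop :=
  (forall p, valid p -> w p != None) /\
  (forall r : worder, exists p, valid p /\ w p = Some r).

Variable i : 'I_N.

Definition Omega (e : profile) (r : upref) : profile :=
  fun j => if j == i then pmeet (e i) r else None.

Definition star (e f : profile) : profile := Omega e (w f).

Definition Upsilon : profile := fun j => if j == i then indiff else None.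

Definition quasi_Goedel_sentence (U d : profile) : Prop :=
  valid d /\ prle d (prneg (star U d)).
Definition quasi_consistent (U d : profile) : Prop :=
  prle d (prneg (star U (prneg d))).
Definition quasi_complete (U d : profile) : Prop :=
  inconsistent (prneg (star U d)) (prneg (star U (prneg d))).

Definition quasi_Goedelian (U : profile) : Prop :=
  exists d, quasi_Goedel_sentence U d /\
            ~ (quasi_consistent U d /\ quasi_complete U d).

End Prefs.

(* Under a dictator at i there is not even a quasi-Gödel sentence.  At
   coordinate i, Upsilon_i * d is w(d) itself, so a quasi-Gödel sentence d
   satisfies d_i <= ~ w(d): every strict preference of w(d) appears reversed
   in d_i.  The dictator property gives w(d) <= d_i whenever d_i is not total
   indifference, so every strict preference of w(d) also appears unreversed in
   d_i; either way w(d) has no strict preference at all, i.e. w(d) = i, and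
   then d_i <= ~ i = c contradicts the validity of d. *)
From mathcomp Require Import all_boot.

Set Implicit Arguments. Unset Strict Implicit. Unset Printing Implicit Defensive.

Section WeakOrders.
Variable A : finType.

Definition wtotal : wrel A := [ffun _ => [ffun _ => true]].

Lemma is_wo_total : is_wo wtotal.
Proof.
by apply/andP; split; apply/forallP=> a; apply/forallP=> b; rewrite ?ffunE //;
  apply/forallP=> c; rewrite !ffunE.
Qed.

Lemma indiffE : indiff A = Some (exist _ wtotal is_wo_total).
Proof. by rewrite /indiff /to_up -/wtotal (insubT (fun R => is_wo R) is_wo_total). Qed.

Lemma sprefU_indiff (a b : A) : sprefU (indiff A) a b = false.
Proof. by rewrite indiffE /= /strict /= /wtotal !ffunE. Qed.

Lemma strict_asym (r : worder A) (a b : A) : strict r a b -> ~~ strict r b a.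
Proof. by case/andP=> rab _; rewrite /strict rab andbF. Qed.

Lemma indiff_nostrict (r : worder A) :
  (forall a b, ~~ strict r a b) -> Some r = indiff A.
Proof.
case: r => R woR nostrict; rewrite indiffE; congr Some; apply: val_inj => /=.
apply/ffunP=> a; apply/ffunP=> b; rewrite !ffunE.
have /andP[/forallP/(_ a)/forallP/(_ b) total _] := woR.
by move: (nostrict b a) total; rewrite /strict /=; case: (R a b); case: (R b a).
Qed.

Lemma pmeet_indiffl (r : worder A) : pmeet (indiff A) (Some r) = Some r.
Proof.
rewrite indiffE /= /to_up.
have -> : [ffun a => [ffun b => val (exist _ wtotal is_wo_total) a b && val r a b]]
          = val r.
  by apply/ffunP=> a; apply/ffunP=> b; rewrite !ffunE /= /wtotal ?ffunE.
by rewrite valK.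
Qed.

Lemma pneg_indiff : pneg (indiff A) = None.
Proof. by rewrite /pneg; case: (indiff A) (indiffE) => // r _; rewrite eqxx. Qed.

Definition wrev (R : wrel A) : wrel A := [ffun a => [ffun b => R b a]].

Lemma is_wo_rev (R : wrel A) : is_wo R -> is_wo (wrev R).
Proof.
case/andP=> /forallP total /forallP trans; apply/andP; split.
  apply/forallP=> a; apply/forallP=> b; rewrite !ffunE orbC.
  exact: (forallP (total a)).
apply/forallP=> a; apply/forallP=> b; apply/forallP=> c; rewrite !ffunE.
apply/implyP=> Rba; apply/implyP=> Rcb.
by move: (trans c) => /forallP/(_ b)/forallP/(_ a); rewrite Rcb Rba.
Qed.

Definition worder_rev (r : worder A) : worder A :=
  exist _ (wrev (val r)) (is_wo_rev (valP r)).

Lemma strict_rev (r : worder A) (a b : A) :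
  strict (worder_rev r) a b = strict r b a.
Proof. by rewrite /strict /= !ffunE. Qed.

Lemma pneg_Some (r : worder A) :
  Some r != indiff A -> pneg (Some r) = Some (worder_rev r).
Proof.
by move=> /negPf /= ->; rewrite /to_up (insubT (fun R => is_wo R) (is_wo_rev (valP r))).
Qed.

(* A strict preference a > b of r would appear in x as b > a, hence x <> i,
   and then b > a would also hold in r. *)
Lemma indiff_of_ple_pneg (r : worder A) (x : upref A) :
  x != None -> ple x (pneg (Some r)) -> (x != indiff A -> ple (Some r) x) ->
  Some r = indiff A.
Proof.
have [/eqP // | r_ne] := boolP (Some r == indiff A).
rewrite pneg_Some //; case: x => [x|] // _ /forallP x_le_rev r_le_x.
apply: indiff_nostrict => a b; apply/negP => rab.
have xba : strict x b a.
  by move/forallP: (x_le_rev b) => /(_ a); rewrite strict_rev rab.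
have [x_indiff | x_ne] := eqVneq (Some x) (indiff A).
  by move: (sprefU_indiff b a); rewrite -x_indiff /= xba.
move: (r_le_x x_ne) => /forallP/(_ b)/forallP/(_ a); rewrite xba /= => rba.
by move: (strict_asym rab); rewrite rba.
Qed.

End WeakOrders.

Section Dictatorship.
Variables (A : finType) (N : nat) (w : profile A N -> upref A) (i : 'I_N).

Lemma star_Upsilon_self (d : profile A N) :
  w d != None -> star w i (Upsilon A i) d i = w d.
Proof.
rewrite /star /Omega /Upsilon eqxx; case: (w d) => [r|] // _.
exact: pmeet_indiffl.
Qed.

Lemma no_quasi_Goedel_sentence (d : profile A N) :
  dictator w i -> (forall p, valid p -> w p != None) ->
  ~ quasi_Goedel_sentence w i (Upsilon A i) d.
Proof.
move=> dict w_valid [d_valid d_le].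
have wd_valid := w_valid d d_valid.
move: (d_le i) (dict d d_valid); rewrite /prneg star_Upsilon_self //.
case: (w d) wd_valid => [r|] // _ di_le [_ r_le_di].
have r_indiff := indiff_of_ple_pneg (d_valid i) di_le r_le_di.
by move: di_le; rewrite r_indiff pneg_indiff; case: (d i) (d_valid i).
Qed.

End Dictatorship.

Theorem theorem12 (A : finType) (N : nat) (hN : 2 <= N) (i : 'I_N)
    (w : profile A N -> upref A) :
  Unanimity w -> IIA w ->
  dictator w i -> UnrestrictedDomain w ->
  ~ quasi_Goedelian w i (Upsilon A i).
Proof.
move=> _ _ dict [w_valid _] [d [sentence _]].
exact: no_quasi_Goedel_sentence dict w_valid sentence.
Qed.
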